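(* Let $R$ be a ring with local units. If there is a trace $t$ on $R$ (with values in some ring) which is injective on the set of idempotents of $R$, then $R$ is directly finite. If $R$ is a $*$-ring with local units and there is a trace on $R$ which is injective on the set of projections (self-adjoint idempotents) of $R$, then $R$ is finite. In particular, a $*$-ring with local units admitting a faithful trace with values in a $*$-ring is finite.
   Context: Rings are associative, not necessarily unital. A ring $R$ has local units if for every finite subset $\{x_1,\dots,x_n\}\subseteq R$ there is an idempotent $u\in R$ with $x_iu=ux_i=x_i$ for all $i$. A ring with local units is directly finite if for all $x,y\in R$ and every idempotent $u$ with $xu=ux=x$ and $yu=uy=y$, $xy=u$ implies $yx=u$. A $*$-ring (ring with involution $x\mapsto x^*$: additive, $(xy)^*=y^*x^*$, $x^{**}=x$) with local units is finite if for all $x\in R$ and every idempotent $u$ with $xu=ux=x$, $xx^*=u$ implies $x^*x=u$. A trace is an additive map $t$ with $t(xy)=t(yx)$. In a $*$-ring, $x\ge0$ means $x$ is a finite sum of elements $zz^*$, and $x>0$ means $x\ge0$, $x\ne0$; a trace between $*$-rings is faithful if $x\ge0\Rightarrow t(x)\ge0$ and $x>0\Rightarrow t(x)>0$. *)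

(* Non-unital (associative) rings are not in MathComp
   (its ring structures are unital), so we define them as a zmodType
   equipped with an associative, biadditive multiplication. *)
From HB Require Import structures.
From mathcomp Require Import all_boot all_order all_algebra.
Set Implicit Arguments. Unset Strict Implicit. Unset Printing Implicit Defensive.
Import GRing.Theory.
Local Open Scope ring_scope.

Record nuring := NURing {
  nr_sort :> zmodType;
  nr_mul : nr_sort -> nr_sort -> nr_sort;
  nr_mulA : forall x y z, nr_mul x (nr_mul y z) = nr_mul (nr_mul x y) z;
  nr_mulDl : forall x y z, nr_mul (x + y) z = nr_mul x z + nr_mul y z;
  nr_mulDr : forall x y z, nr_mul x (y + z) = nr_mul x y + nr_mul x z
}.
Arguments nr_mul {n}.

Record nustarring := NUStarRing {
  nsr_base :> nuring;
  nsr_star : nsr_base -> nsr_base;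
  nsr_starD : forall x y, nsr_star (x + y) = nsr_star x + nsr_star y;
  nsr_starM : forall x y, nsr_star (nr_mul x y) = nr_mul (nsr_star y) (nsr_star x);
  nsr_starK : forall x, nsr_star (nsr_star x) = x
}.
Arguments nsr_star {n}.

Definition idempotent (R : nuring) (u : R) : Prop := nr_mul u u = u.

Definition unit_for (R : nuring) (u x : R) : Prop :=
  nr_mul x u = x /\ nr_mul u x = x.

Definition has_local_units (R : nuring) : Prop :=
  forall s : seq R, exists u : R, idempotent u /\ forall x, x \in s -> unit_for u x.

Definition directly_finite (R : nuring) : Prop :=
  forall (x y u : R), idempotent u -> unit_for u x -> unit_for u y ->
    nr_mul x y = u -> nr_mul y x = u.

Definition star_finite (R : nustarring) : Prop :=
  forall (x u : R), idempotent u -> unit_for u x ->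
    nr_mul x (nsr_star x) = u -> nr_mul (nsr_star x) x = u.

Definition is_trace (R S : nuring) (t : R -> S) : Prop :=
  (forall x y, t (x + y) = t x + t y) /\
  (forall x y, t (nr_mul x y) = t (nr_mul y x)).

Definition projection (R : nustarring) (p : R) : Prop :=
  idempotent p /\ nsr_star p = p.

Definition injective_on_idempotents (R S : nuring) (t : R -> S) : Prop :=
  forall e f : R, idempotent e -> idempotent f -> t e = t f -> e = f.

Definition injective_on_projections (R : nustarring) (S : nuring) (t : R -> S) : Prop :=
  forall p q : R, projection p -> projection q -> t p = t q -> p = q.

Definition star_nonneg (R : nustarring) (x : R) : Prop :=
  exists s : seq R, x = \sum_(z <- s) nr_mul z (nsr_star z).

Definition star_pos (R : nustarring) (x : R) : Prop :=
  star_nonneg x /\ x <> 0.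

Definition faithful_trace (R S : nustarring) (t : R -> S) : Prop :=
  is_trace (t : nsr_base R -> nsr_base S) /\
  (forall x : R, star_nonneg x -> star_nonneg (t x)) /\
  (forall x : R, star_pos x -> star_pos (t x)).

From Pilot Require Import Defs.
From mathcomp Require Import all_boot all_order all_algebra.
Set Implicit Arguments.
Unset Strict Implicit.
Unset Printing Implicit Defensive.
Import GRing.Theory.
Local Open Scope ring_scope.

(** Traces turn the relation [x y = u] into [t (y x) = t u]. For direct
finiteness, [y x] is an idempotent with the same trace as [u]. In the
[*]-case with [x x^* = u], both [u] and [p = x^* x] are projections with
[p <= u]; a trace injective on projections gives [p = u] directly, and a
faithful trace does too because [u - p] is a projection, hence positive
unless zero, while [t (u - p) = 0]. *)

Section AdditiveMorphism.
Variables (U V : zmodType) (f : U -> V).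
Hypothesis fD : {morph f : x y / x + y}.

Lemma addmorph0 : f 0 = 0.
Proof. by apply: (@addrI _ (f 0)); rewrite -fD !addr0. Qed.

Lemma addmorphN : {morph f : x / - x}.
Proof. by move=> x; apply: (@addrI _ (f x)); rewrite -fD !subrr addmorph0. Qed.

Lemma addmorphB : {morph f : x y / x - y}.
Proof. by move=> x y; rewrite fD addmorphN. Qed.

End AdditiveMorphism.

(* Importing ssrfun shadows [Defs.idempotent] with the operator property
[idempotent op], hence the qualified name below. *)
Section NURingTheory.
Variable R : nuring.
Local Notation "x * y" := (@nr_mul R x y) : ring_scope.

Lemma nr_mulrBr (x y z : R) : x * (y - z) = x * y - x * z.
Proof. exact: (@addmorphB _ _ (nr_mul x) (nr_mulDr x)). Qed.

Lemma nr_mulrBl (x y z : R) : (x - y) * z = x * z - y * z.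
Proof. exact: (@addmorphB _ _ (nr_mul^~ z) (fun x y => nr_mulDl x y z)). Qed.

Lemma idempotent_mul_rev (x y u : R) :
  y * u = y -> x * y = u -> Defs.idempotent (y * x).
Proof. by move=> yu xy; rewrite /Defs.idempotent nr_mulA -(nr_mulA y x) xy yu. Qed.

Lemma directly_finite_of_trace (S : nuring) (t : R -> S) :
  is_trace t -> injective_on_idempotents t -> directly_finite R.
Proof.
move=> [_ tC] t_inj x y u u_idem _ [yu _] xy.
by apply: t_inj; [exact: idempotent_mul_rev yu xy | | rewrite tC xy].
Qed.

End NURingTheory.

Section NUStarRingTheory.
Variable R : nustarring.
Local Notation "x * y" := (@nr_mul R x y) : ring_scope.
Local Notation "x ^*" := (@nsr_star R x) : ring_scope.

Definition proj_le (p q : R) : Prop := q * p = p /\ p * q = p.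

Lemma nsr_starB (x y : R) : (x - y)^* = x^* - y^*.
Proof. exact: (@addmorphB _ _ nsr_star (@nsr_starD R)). Qed.

Lemma projection_subr (p q : R) :
  projection p -> projection q -> proj_le p q -> projection (q - p).
Proof.
move=> [p_idem p_sa] [q_idem q_sa] [qp pq]; split; last first.
  by rewrite nsr_starB p_sa q_sa.
rewrite /Defs.idempotent nr_mulrBl !nr_mulrBr qp pq q_idem p_idem.
by rewrite subrr subr0.
Qed.

Lemma star_nonneg_projection (p : R) : projection p -> star_nonneg p.
Proof.
by move=> [p_idem p_sa]; exists [:: p]; rewrite big_seq1 p_sa p_idem.
Qed.

Lemma partial_isometry_projections (x u : R) :
  unit_for u x -> x * x^* = u ->
  [/\ projection u, projection (x^* * x) & proj_le (x^* * x) u].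
Proof.
move=> [xu ux] xxs.
have u_sa : u^* = u by rewrite -xxs nsr_starM nsr_starK.
have xsu : x^* * u = x^* by rewrite -u_sa -nsr_starM ux.
have uxs : u * x^* = x^* by rewrite -u_sa -nsr_starM xu.
split; first split => //.
- by rewrite /Defs.idempotent -{1}xxs -nr_mulA xsu.
- split; last by rewrite nsr_starM nsr_starK.
  by rewrite /Defs.idempotent nr_mulA -(nr_mulA _ x) xxs xsu.
- by split; [rewrite nr_mulA uxs | rewrite -nr_mulA xu].
Qed.

Lemma star_finite_of_trace (S : nuring) (t : R -> S) :
  is_trace t ->
  (forall p q, projection p -> projection q -> proj_le p q ->
     t p = t q -> p = q) ->
  star_finite R.
Proof.
move=> [_ tC] t_inj x u _ ux xxs.
have [u_proj p_proj le_pu] := partial_isometry_projections ux xxs.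
by apply: t_inj => //; rewrite tC xxs.
Qed.

Lemma faithful_trace_proj_le_eq (S : nustarring) (t : R -> S) :
  faithful_trace t -> forall p q, projection p -> projection q ->
  proj_le p q -> t p = t q -> p = q.
Proof.
move=> [[tD _] [_ t_pos]] p q p_proj q_proj le_pq tpq.
have [/subr0_eq -> // | qp_neq0] := eqVneq (q - p) 0.
have [_ []] : star_pos (t (q - p)).
  apply: t_pos; split; last exact/eqP.
  exact/star_nonneg_projection/projection_subr.
by rewrite (addmorphB tD) tpq subrr.
Qed.

End NUStarRingTheory.

Theorem proposition4p2 :
  (forall (R S : nuring) (t : R -> S),
      has_local_units R -> is_trace t -> injective_on_idempotents t ->
      directly_finite R) /\
  (forall (R : nustarring) (S : nuring) (t : R -> S),
      has_local_units R -> is_trace t -> injective_on_projections t ->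
      star_finite R) /\
  (forall (R S : nustarring) (t : R -> S),
      has_local_units R -> faithful_trace t -> star_finite R).
Proof.
split; [|split].
- by move=> R S t _; apply: directly_finite_of_trace.
- move=> R S t _ t_tr t_inj; apply: (star_finite_of_trace t_tr).
  by move=> p q p_proj q_proj _; apply: t_inj.
- move=> R S t _ t_faithful; apply: (star_finite_of_trace (proj1 t_faithful)).
  exact: faithful_trace_proj_le_eq.
Qed.
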